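(* Let $(\mathbf{i},\mathbf{a})\in I^m\times\mathbb{C}^m$, let $\pi\in S_m$ be $(\mathbf{i},\mathbf{a})$-admissible, and let $\pi=s_{k_r}\cdots s_{k_1}$ be a reduced expression in simple transpositions. Then for each $1\le p\le r$, $s_{k_p}$ is $(s_{k_p}\cdots s_{k_1}(\mathbf{i}),\,s_{k_p}\cdots s_{k_1}(\mathbf{a}))$-admissible.
   Context: $I$ is the vertex set of a finite simple bipartite graph $I=I_{\bar0}\sqcup I_{\bar1}$, with every edge oriented from its even to its odd endpoint; write $i\leftarrow j$ if there is an oriented edge from $j$ to $i$. $S_m$ acts on $m$-tuples by $\pi(\mathbf{a})=(a_{\pi^{-1}(1)},\dots,a_{\pi^{-1}(m)})$; $s_k=(k,k+1)$. For $(\mathbf{i},\mathbf{a})\in I^m\times\mathbb{C}^m$, distinct indices $k,l$ are not $(\mathbf{i},\mathbf{a})$-switchable if $i_k\leftarrow i_l$ and $a_k=a_l+1$ (checked for the pair in either order), and switchable otherwise. $\pi\in S_m$ is $(\mathbf{i},\mathbf{a})$-admissible if for every non-switchable pair $k,l$, $\pi(k),\pi(l)$ are in the same relative order as $k,l$. *)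

From HB Require Import structures.
From mathcomp Require Import all_boot all_order all_algebra all_fingroup.
Set Implicit Arguments. Unset Strict Implicit. Unset Printing Implicit Defensive.
Import GRing.Theory Num.Theory.
Local Open Scope ring_scope.

(* Finite simple bipartite graph on a finite vertex type I:
   e is the (symmetric, irreflexive) adjacency relation,
   par v = true iff v is odd (v in I_1), false iff v is even (v in I_0). *)
Definition simple_bipartite (I : finType) (e : rel I) (par : I -> bool) : Prop :=
  [/\ symmetric e, irreflexive e & forall x y, e x y -> par x != par y].

(* i <- j : there is an oriented edge from j to i (edges go even -> odd). *)
Definition arrow (I : finType) (e : rel I) (par : I -> bool) (i j : I) : bool :=
  [&& e i j, ~~ par j & par i].

Definition act_tuple (m : nat) (T : Type) (pi : {perm 'I_m}) (a : 'I_m -> T) : 'I_m -> T :=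
  fun k => a (pi^-1 k)%g.

(* Simple transposition s_k = (k, k+1), written with 0-based positions;
   only meaningful when k.+1 < m. *)
Definition s_simple (m : nat) (k : nat) : {perm 'I_m.+1} :=
  tperm (inord k) (inord k.+1).

Definition not_switchable (I : finType) (e : rel I) (par : I -> bool)
  (C : ringType) (m : nat) (i : 'I_m -> I) (a : 'I_m -> C) (k l : 'I_m) : bool :=
  (arrow e par (i k) (i l) && (a k == a l + 1))
  || (arrow e par (i l) (i k) && (a l == a k + 1)).

Definition admissible (I : finType) (e : rel I) (par : I -> bool)
  (C : ringType) (m : nat) (i : 'I_m -> I) (a : 'I_m -> C) (pi : {perm 'I_m}) : Prop :=
  forall k l : 'I_m, k != l -> not_switchable e par i a k l ->
    ((k < l)%N = (pi k < pi l)%N).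

(* Word [:: k_1; ...; k_r] represents s_{k_r} ... s_{k_1} (as functions);
   in mathcomp (p * q) applies p first, so this is s_{k_1} * ... * s_{k_r}. *)
Definition word_perm (m : nat) (ks : seq nat) : {perm 'I_m.+1} :=
  (\prod_(k <- ks) s_simple m k)%g.

Definition valid_word (m : nat) (ks : seq nat) : bool := all (fun k => k.+1 < m.+1)%N ks.

Definition reduced_expr (m : nat) (pi : {perm 'I_m.+1}) (ks : seq nat) : Prop :=
  valid_word m ks /\ word_perm m ks = pi /\
  forall ks', valid_word m ks' -> word_perm m ks' = pi -> (size ks <= size ks')%N.

From HB Require Import structures.
From mathcomp Require Import all_boot all_order all_algebra all_fingroup.
From mathcomp Require Import zify.
Set Implicit Arguments. Unset Strict Implicit. Unset Printing Implicit Defensive.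

(* Write pi_n for the product of the first n letters of the reduced word.  If
   s_{k_p} reversed the order of two non-switchable positions u, v of the
   acted-on tuple, then x = pi_p^-1 u and y = pi_p^-1 v are non-switchable for
   the original data, so pi keeps them in order: the relative order of
   pi_n x and pi_n y, equal at n = 0 and n = r, changes at step p and hence at
   some other step as well.  Each such change replaces pi_n by pi_n o (x y),
   so deleting both letters gives a shorter word for pi. *)

Lemma exists_bool_change (f : nat -> bool) a b : a <= b -> f a != f b ->
  exists2 j, a <= j < b & f j != f j.+1.
Proof.
elim: b => [|b IHb]; first by rewrite leqn0 => /eqP ->; rewrite eqxx.
rewrite leq_eqVlt => /orP [/eqP ->|]; first by rewrite eqxx.
rewrite ltnS => le_ab.
have [/eqP fab fab1 | fab _] := boolP (f a == f b).
  by exists b; [rewrite le_ab ltnSn | rewrite -fab].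
have [j /andP [le_aj lt_jb] fj] := IHb le_ab fab.
by exists j; rewrite ?le_aj ?ltnS ?(ltnW lt_jb).
Qed.

Lemma exists_other_bool_change (f : nat -> bool) r j :
  j < r -> f 0 = f r -> f j != f j.+1 -> exists2 J, J != j & (J < r) && (f J != f J.+1).
Proof.
move=> lt_jr f0r fj.
have [/eqP f0j | f0j] := boolP (f 0 == f j).
  have fjr : f j.+1 != f r by rewrite -f0r f0j eq_sym.
  have [J /andP [le_jJ lt_Jr] fJ] := exists_bool_change lt_jr fjr.
  by exists J; rewrite ?lt_Jr ?fJ // neq_ltn -ltnS le_jJ orbT.
have [J /andP [_ lt_Jj] fJ] := exists_bool_change (leq0n j) f0j.
by exists J; rewrite ?neq_ltn ?lt_Jj ?fJ ?(ltn_trans lt_Jj).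
Qed.

Lemma tperm_adj_order_flip n (A B x y : 'I_n) : B = A.+1 :> nat ->
  (x < y) != (tperm A B x < tperm A B y) -> tperm A B = tperm x y.
Proof.
move=> BA.
have val_neq (z t : 'I_n) : z <> t -> (z : nat) <> t by move=> ne /val_inj.
case: tpermP => [->|->|/val_neq xA /val_neq xB];
  case: tpermP => [->|->|/val_neq yA /val_neq yB];
  rewrite ?ltnn ?eqxx //; try by rewrite tpermC.
all: lia.
Qed.

Lemma mul_tperm_adj_order_flip n (w : {perm 'I_n}) (A B x y : 'I_n) :
  B = A.+1 :> nat ->
  (w x < w y) != ((w * tperm A B)%g x < (w * tperm A B)%g y) ->
  (w * tperm A B = tperm x y * w)%g.
Proof.
rewrite !permM => BA /(tperm_adj_order_flip BA) ->.
by rewrite -tpermJ conjgE mulgA mulgV mul1g.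
Qed.

Section Words.

Variable m : nat.

Lemma word_perm_cat (s1 s2 : seq nat) :
  word_perm m (s1 ++ s2) = (word_perm m s1 * word_perm m s2)%g.
Proof. by rewrite /word_perm big_cat. Qed.

Lemma word_perm_take_succ (ks : seq nat) j : j < size ks ->
  word_perm m (take j.+1 ks) = (word_perm m (take j ks) * s_simple m (nth 0 ks j))%g.
Proof. by move=> lt_j; rewrite (take_nth 0) // -cats1 word_perm_cat /word_perm big_seq1. Qed.

Lemma word_perm_order_flip (ks : seq nat) j (x y : 'I_m.+1) :
  valid_word m ks -> j < size ks ->
  (word_perm m (take j ks) x < word_perm m (take j ks) y) !=
  (word_perm m (take j.+1 ks) x < word_perm m (take j.+1 ks) y) ->
  word_perm m (take j.+1 ks) = (tperm x y * word_perm m (take j ks))%g.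
Proof.
move=> /allP valid lt_j; rewrite word_perm_take_succ //.
have lt_k : nth 0 ks j < m by apply: valid; apply: mem_nth.
by apply: mul_tperm_adj_order_flip; rewrite !inordK //; lia.
Qed.

Lemma shorter_word_of_repeated_step (ks : seq nat) (t : {perm 'I_m.+1}) j1 j2 :
  (t * t = 1)%g -> j1 < j2 < size ks ->
  word_perm m (take j1.+1 ks) = (t * word_perm m (take j1 ks))%g ->
  word_perm m (take j2.+1 ks) = (t * word_perm m (take j2 ks))%g ->
  exists ks' : seq nat, [/\ {subset ks' <= ks}, size ks' < size ks &
                  word_perm m ks' = word_perm m ks].
Proof.
move=> tt /andP [lt_12 lt_2] step1 step2.
exists (take j1 ks ++ drop j1.+1 (take j2 ks) ++ drop j2.+1 ks); split.
- move=> k; rewrite !mem_cat => /or3P [/mem_take|/mem_drop/mem_take|/mem_drop] //.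
- by rewrite !size_cat !size_drop !size_takel; lia.
have split2 : word_perm m (take j2 ks) =
    (word_perm m (take j1.+1 ks) * word_perm m (drop j1.+1 (take j2 ks)))%g.
  by rewrite -word_perm_cat -{1}(cat_take_drop j1.+1 (take j2 ks)) take_takel.
rewrite -{4}(cat_take_drop j2.+1 ks) !word_perm_cat step2 split2 step1.
by rewrite !mulgA tt mul1g.
Qed.

Lemma reduced_expr_no_repeated_step (pi : {perm 'I_m.+1}) ks t j1 j2 :
  reduced_expr pi ks -> (t * t = 1)%g -> j1 < j2 < size ks ->
  word_perm m (take j1.+1 ks) = (t * word_perm m (take j1 ks))%g ->
  word_perm m (take j2.+1 ks) = (t * word_perm m (take j2 ks))%g -> False.
Proof.
move=> [/allP valid [word_pi minimal]] tt lt_12 step1 step2.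
have [ks' [sub_ks' lt_size word_ks']] := shorter_word_of_repeated_step tt lt_12 step1 step2.
have valid' : valid_word m ks' by apply/allP => k /sub_ks'/valid.
by move: (minimal ks' valid' (etrans word_ks' word_pi)); rewrite leqNgt lt_size.
Qed.

End Words.

Lemma not_switchable_act (I : finType) (e : rel I) (par : I -> bool)
  (C : nzRingType) n (w : {perm 'I_n}) (i : 'I_n -> I) (a : 'I_n -> C) (u v : 'I_n) :
  not_switchable e par (act_tuple w i) (act_tuple w a) u v =
  not_switchable e par i a (w^-1 u)%g (w^-1 v)%g.
Proof. by []. Qed.

Theorem corollary5p7 (I : finType) (e : rel I) (par : I -> bool)
  (C : numClosedFieldType) (m : nat)
  (i : 'I_m.+1 -> I) (a : 'I_m.+1 -> C) (pi : {perm 'I_m.+1}) (ks : seq nat) :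
  simple_bipartite e par ->
  admissible e par i a pi ->
  reduced_expr pi ks ->
  forall p : nat, (1 <= p <= size ks)%N ->
    admissible e par
      (act_tuple (word_perm m (take p ks)) i)
      (act_tuple (word_perm m (take p ks)) a)
      (s_simple m (nth 0%N ks p.-1)).
Proof.
move=> _ adm_pi red_ks [//|j] /andP [_ lt_j] u v uv.
rewrite not_switchable_act /= => nsw.
set w := word_perm m (take j.+1 ks); set s := s_simple m (nth 0 ks j).
have [/eqP // | flip] := boolP ((u < v) == (s u < s v)); exfalso.
set x := (w^-1 u)%g; set y := (w^-1 v)%g.
have [valid [word_pi _]] := red_ks.
pose f n := word_perm m (take n ks) x < word_perm m (take n ks) y.
have f0r : f 0 = f (size ks).
  rewrite /f take0 take_size word_pi /word_perm big_nil !perm1.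
  by apply: adm_pi nsw; rewrite (inj_eq perm_inj).
have fj : f j != f j.+1.
  have wj : word_perm m (take j ks) = (w * s)%g.
    by rewrite /w word_perm_take_succ // -mulgA tperm2 mulg1.
  by rewrite /f wj -/w !permM !permKV eq_sym.
have [J neq_Jj /andP [lt_J fJ]] := exists_other_bool_change lt_j f0r fj.
have stepj := word_perm_order_flip valid lt_j fj.
have stepJ := word_perm_order_flip valid lt_J fJ.
have [lt_Jj | lt_jJ | eq_Jj] := ltngtP J j.
- by apply: (reduced_expr_no_repeated_step red_ks (tperm2 x y) _ stepJ stepj);
    rewrite lt_Jj lt_j.
- by apply: (reduced_expr_no_repeated_step red_ks (tperm2 x y) _ stepj stepJ);
    rewrite lt_jJ lt_J.
- by rewrite eq_Jj eqxx in neq_Jj.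
Qed.
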